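(* For each integer $n\ge0$ let $P_n(x)=\omega_n^-(x)$ denote the number of square-free words of length $n$ over an alphabet with $x$ letters ($x$ a positive integer). Then there is a polynomial in $x$ of degree $n$ with integer coefficients and leading coefficient $1$ which coincides with $P_n(x)$ for all positive integers $x$. Moreover, for $n>1$, $P_n(x)$ is a multiple of $x(x-1)$, and for $n>3$, $P_n(x)$ is a multiple of $x(x-1)(x-2)$. Explicitly, $P_0=1$, $P_1=x$, $P_2=x(x-1)$, $P_3=x(x-1)^2$, $P_4=x^2(x-1)(x-2)$.
   Context: A square is a nonempty word of the form $uu$; a word is square-free if no contiguous subword (factor) of it, including the word itself, is a square. *)

From mathcomp Require Import all_boot all_order all_algebra.
Set Implicit Arguments. Unset Strict Implicit. Unset Printing Implicit Defensive.

Definition is_square (T : eqType) (s : seq T) : bool :=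
  [exists u : 'I_(size s).+1,
     (0 < u) && (s == take u s ++ take u s)].

(* A word is square-free if no factor (contiguous subword, including the
   word itself) is a square.  Every factor of w is of the form
   take l (drop i w) with i, l <= size w. *)
Definition squarefree (T : eqType) (w : seq T) : bool :=
  [forall i : 'I_(size w).+1, forall l : 'I_(size w).+1,
     ~~ is_square (take l (drop i w))].

Definition nb_squarefree (n x : nat) : nat :=
  #|[set w : n.-tuple 'I_x | squarefree w]|.

(** Fix the letters of a word by their order of first occurrence.  Extending a
    word by one letter, the new letter is either one of the [k] letters already
    used or one of the [x - k] unused ones, and all unused ones give words that
    are equal up to renaming letters, hence equally often square-free.  This
    gives a recursion for the number of square-free extensions that is a
    polynomial in [x] of degree the number of added letters, monic since the
    word [0 1 ... n-1] is square-free.  Unfolding it two (resp. four) steps from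
    the empty word exposes the factors [x (x - 1)] (resp. [x (x - 1) (x - 2)]),
    because the words [0 0], [0 1 1], [0 1 0 0] and [0 1 0 1] are squares. *)
From mathcomp Require Import all_boot all_order all_algebra.
From mathcomp Require Import ring.
Set Implicit Arguments. Unset Strict Implicit. Unset Printing Implicit Defensive.
Import GRing.Theory.

Section SquareFreeWords.

Variable T : eqType.
Implicit Types s w : seq T.

Lemma is_squareP s :
  reflect (exists u, (0 < u <= size s)%N /\ s = take u s ++ take u s)
          (is_square s).
Proof.
apply: (iffP existsP) => [[u /andP[u0 /eqP e]]|[u [/andP[u0 us] e]]].
  by exists (val u); rewrite u0 -ltnS ltn_ord.
by exists (Ordinal (us : (u < (size s).+1)%N)); rewrite /= u0 -e eqxx.
Qed.

Lemma is_square_nil : ~~ is_square ([::] : seq T).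
Proof. by apply/is_squareP => -[u [/andP[u0]]]; rewrite leqNgt u0. Qed.

Lemma squarefreeP s :
  reflect (forall i l, ~~ is_square (take l (drop i s))) (squarefree s).
Proof.
apply: (iffP forallP) => [sf i l | sf i]; last by apply/forallP.
have [/ltnW ilt|ile] := ltnP (size s) i.
  by rewrite drop_oversize ?take_nil ?is_square_nil.
have [/ltnW llt|lle] := ltnP (size s) l; last first.
  exact: (forallP (sf (Ordinal (ile : (i < (size s).+1)%N)))
                 (Ordinal (lle : (l < (size s).+1)%N))).
rewrite take_oversize; last by rewrite size_drop (leq_trans (leq_subr _ _)).
have := forallP (sf (Ordinal (ile : (i < (size s).+1)%N))) ord_max.
by rewrite /= take_oversize // size_drop leq_subr.
Qed.

Lemma squarefree_take n s : squarefree s -> squarefree (take n s).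
Proof.
move=> /squarefreeP sf; apply/squarefreeP => i l.
have [/ltnW ni|lein] := ltnP n i.
  rewrite drop_oversize ?take_nil ?is_square_nil //.
  by rewrite size_take_min (leq_trans (geq_minl _ _)).
by rewrite -[n](subnK lein) -take_drop -take_min.
Qed.

Lemma uniq_squarefree s : uniq s -> squarefree s.
Proof.
move=> us; apply/squarefreeP => i l; apply/is_squareP => -[u [/andP[u0 ul] e]].
have : uniq (take l (drop i s)) by rewrite take_uniq // drop_uniq.
rewrite e cat_uniq => /and3P[_ /hasPn disj _].
move: e ul; case: (take u _) disj => [|a t] disj.
  by move=> ->; rewrite leqNgt u0.
by have := disj a; rewrite mem_head => /(_ isT).
Qed.

End SquareFreeWords.

Lemma squarefree_map (T T' : eqType) (f : T -> T') (s : seq T) :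
  {in s &, injective f} -> squarefree (map f s) = squarefree s.
Proof.
move=> injf; apply/squarefreeP/squarefreeP => sf i l; apply: contra (sf i l);
  rewrite -map_drop -map_take => /is_squareP[u [/andP[u0 us] e]];
  apply/is_squareP; exists u; rewrite u0 -?map_take ?size_map in us e *.
  by rewrite -map_cat -e.
split=> //; rewrite -map_cat in e; apply: (inj_in_map injf) e.
  by apply/allP => y /mem_take /mem_drop.
by apply/allP => y; rewrite mem_cat orbb => /mem_take /mem_take /mem_drop.
Qed.

(* Versions quantifying over [iota] instead of ordinals: the ordinal quantifiers
   of [squarefree] go through the locked [card] and do not compute. *)
Definition is_square_iota (t : seq nat) : bool :=
  has (fun u => (0 < u) && (t == take u t ++ take u t)) (iota 0 (size t).+1).

Definition squarefree_iota (s : seq nat) : bool :=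
  all (fun i => all (fun l => ~~ is_square_iota (take l (drop i s)))
                    (iota 0 (size s).+1))
      (iota 0 (size s).+1).

Lemma is_square_iotaE t : is_square_iota t = is_square t.
Proof.
apply/hasP/is_squareP => [[u]|[u [/andP[u0 us] e]]].
  by rewrite mem_iota ltnS => us /andP[u0 /eqP e]; exists u; rewrite u0 us.
by exists u; rewrite ?mem_iota ?ltnS // u0 -e eqxx.
Qed.

Lemma squarefree_iotaE s : squarefree_iota s = squarefree s.
Proof.
have mem_iota_ord n (i : 'I_n.+1) : val i \in iota 0 n.+1.
  by rewrite mem_iota ltn_ord.
apply/allP/forallP => [sf i|sf i].
  apply/forallP => l; rewrite -is_square_iotaE.
  exact: (allP (sf _ (mem_iota_ord _ i))) _ (mem_iota_ord _ l).
rewrite mem_iota => /andP[_ ilt]; apply/allP => l; rewrite mem_iota => /andP[_ llt].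
by rewrite is_square_iotaE; apply: (forallP (sf (Ordinal ilt)) (Ordinal llt)).
Qed.

Section Standardization.

Variable T : eqType.
Implicit Types (w : seq T) (a : T).

(* The distinct letters of [w], in order of first occurrence. *)
Definition letters w : seq T := rev (undup (rev w)).

Definition standardize w : seq nat := [seq index a (letters w) | a <- w].

Lemma mem_letters w : letters w =i w.
Proof. by move=> a; rewrite mem_rev mem_undup mem_rev. Qed.

Lemma letters_uniq w : uniq (letters w).
Proof. by rewrite rev_uniq undup_uniq. Qed.

Lemma letters_rcons w a :
  letters (rcons w a) = if a \in w then letters w else rcons (letters w) a.
Proof. by rewrite /letters rev_rcons /= mem_rev; case: ifP; rewrite ?rev_cons. Qed.

Lemma index_letters_eq_size w a :
  (index a (letters w) == size (letters w)) = (a \notin w).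
Proof. by rewrite -mem_letters -index_mem ltn_neqAle index_size andbT negbK. Qed.

Lemma size_letters_rcons w a :
  size (letters (rcons w a)) = (size (letters w) + (a \notin w))%N.
Proof. by rewrite letters_rcons; case: ifP; rewrite ?size_rcons ?addn0 ?addn1. Qed.

Lemma standardize_rcons w a :
  standardize (rcons w a) = rcons (standardize w) (index a (letters w)).
Proof.
rewrite /standardize letters_rcons map_rcons; case: ifP => aw //.
congr rcons.
  by apply/eq_in_map => b bw; rewrite -cats1 index_cat mem_letters bw.
by rewrite -cats1 index_cat mem_letters aw /= eqxx addn0 memNindex ?mem_letters ?aw.
Qed.

Lemma squarefree_standardize w : squarefree (standardize w) = squarefree w.
Proof.
rewrite squarefree_map // => a b; rewrite -!(mem_letters w); exact: index_inj.
Qed.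

End Standardization.

Local Open Scope ring_scope.

Lemma big_index_uniq (T : eqType) (R : nmodType) (d : seq T) (F : nat -> R) :
  uniq d -> \sum_(a <- d) F (index a d) = \sum_(0 <= j < size d) F j.
Proof.
elim: d F => [|b d IHd] F /=; first by rewrite big_nil big_geq.
move=> /andP[bd ud]; rewrite big_cons eqxx big_nat_recl // -IHd //.
congr (_ + _); apply: eq_big_seq => a ad /=.
by case: eqP => // ba; rewrite ba ad in bd.
Qed.

Lemma sum_index_uniq (T : finType) (R : nmodType) (d : seq T) (F : nat -> R) :
  uniq d ->
  \sum_(a : T) F (index a d) =
  \sum_(0 <= j < size d) F j + F (size d) *+ (#|T| - size d)%N.
Proof.
move=> ud; rewrite (bigID [in d]) /= -big_uniq // big_index_uniq //.
congr (_ + _); rewrite (eq_bigr (fun=> F (size d))) => [|a /memNindex -> //].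
rewrite sumr_const -(cardC [in d]) (card_uniqP ud) addKn.
by congr (_ *+ _); apply: eq_card.
Qed.

Lemma sum_tupleS (T : finType) (R : nmodType) m (F : m.+1.-tuple T -> R) :
  \sum_(t : m.+1.-tuple T) F t =
  \sum_(a : T) \sum_(t : m.-tuple T) F [tuple of a :: t].
Proof.
rewrite pair_big /=.
rewrite (reindex (fun p : T * m.-tuple T => [tuple of p.1 :: p.2])) //=.
exists (fun t : m.+1.-tuple T => (thead t, [tuple of behead t])).
  by move=> [a t] _; rewrite theadE; congr pair; apply: val_inj.
by move=> t _; rewrite -tuple_eta.
Qed.

(* [extension_poly m c k], for a standardized word [c] on the letters
   [0, ..., k-1], evaluated at [x] counts the square-free words [c ++ v] with
   [size v = m] over an alphabet of [x] letters; its last summand stands for the [x - k] choices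
   of an unused letter, all of which standardize to [k]. *)
Fixpoint extension_poly (m : nat) (c : seq nat) (k : nat) : {poly int} :=
  if m is m'.+1 then
    \sum_(0 <= j < k) extension_poly m' (rcons c j) k
      + ('X - k%:R%:P) * extension_poly m' (rcons c k) k.+1
  else (squarefree c)%:R.

Lemma extension_polyS m c k :
  extension_poly m.+1 c k =
  \sum_(0 <= j < k) extension_poly m (rcons c j) k
    + ('X - k%:R%:P) * extension_poly m (rcons c k) k.+1.
Proof. by []. Qed.

Lemma extension_poly_eq0 m c k : ~~ squarefree c -> extension_poly m c k = 0.
Proof.
elim: m c k => [|m IHm] c k sfNc; first by rewrite /= (negbTE sfNc).
have sfNcj j : ~~ squarefree (rcons c j).
  apply: contra sfNc; rewrite -cats1 => /(squarefree_take (size c)).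
  by rewrite take_size_cat.
by rewrite extension_polyS IHm // mulr0 addr0 big1 // => j _; apply: IHm.
Qed.

(* The unfolding used for explicit computations: the test makes the terms of
   non-square-free words vanish after evaluation by [simpl]. *)
Lemma extension_polyS_pruned m c k :
  extension_poly m.+1 c k =
  \sum_(0 <= j < k)
     (if squarefree_iota (rcons c j) then extension_poly m (rcons c j) k else 0)
  + ('X - k%:R%:P) *
    (if squarefree_iota (rcons c k) then extension_poly m (rcons c k) k.+1 else 0).
Proof.
have pruned d k' :
    (if squarefree_iota d then extension_poly m d k' else 0) = extension_poly m d k'.
  by rewrite squarefree_iotaE; case: ifP => // /negbT /extension_poly_eq0->.
by rewrite extension_polyS pruned; congr (_ + _); apply: eq_bigr => j _; rewrite pruned.
Qed.

Lemma horner_extension_poly x m (w : seq 'I_x) :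
  (extension_poly m (standardize w) (size (letters w))).[x%:Z] =
  \sum_(t : m.-tuple 'I_x) (squarefree (w ++ t))%:R.
Proof.
elim: m w => [|m IHm] w.
  rewrite (eq_bigr (fun=> (squarefree w)%:R)) => [|t _]; last first.
    by rewrite tuple0 cats0.
  by rewrite sumr_const card_tuple expn0 /= hornerMn hornerC squarefree_standardize.
set c := standardize w; set d := letters w.
pose G j := (extension_poly m (rcons c j) (size d + (j == size d))).[x%:Z].
have extend_by a :
    \sum_(t : m.-tuple 'I_x) (squarefree (w ++ a :: t))%:R = G (index a d).
  under eq_bigr do rewrite -cat_rcons.
  by rewrite -IHm standardize_rcons size_letters_rcons /G index_letters_eq_size.
have size_d : (size d <= x)%N.
  by rewrite -(card_uniqP (letters_uniq w)) -[x in (_ <= x)%N]card_ord max_card.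
rewrite sum_tupleS (eq_bigr _ (fun a _ => extend_by a)) sum_index_uniq ?letters_uniq //.
rewrite extension_polyS hornerD hornerM hornerXsubC horner_sum card_ord.
congr (_ + _).
  by apply: eq_big_nat => j /andP[_ /ltn_eqF jd]; rewrite /G jd addn0.
by rewrite /G eqxx addn1 -[RHS]mulr_natl natrB // !natz.
Qed.

Lemma size_extension_poly m c k : (size (extension_poly m c k) <= m.+1)%N.
Proof.
elim: m c k => [|m IHm] c k /=.
  by case: squarefree; rewrite ?size_poly1 ?size_poly0.
rewrite (leq_trans (size_polyD _ _)) // geq_max; apply/andP; split.
  apply: leq_trans (size_sum _ _ _) _.
  by apply/bigmax_leqP_seq => j _ _; apply/leqW/IHm.
by rewrite (leq_trans (size_polyMleq _ _)) // size_XsubC add2n ltnS.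
Qed.

Lemma coef_extension_poly m c k :
  (extension_poly m c k)`_m = (squarefree (c ++ iota k m))%:R.
Proof.
elim: m c k => [|m IHm] c k; first by rewrite cats0 /= coefMn coef1.
have coef_gt (p : {poly int}) : (size p <= m.+1)%N -> p`_m.+1 = 0.
  by move=> /leq_sizeP->.
rewrite extension_polyS coefD coef_gt; last first.
  apply: leq_trans (size_sum _ _ _) _.
  by apply/bigmax_leqP_seq => j _ _; apply: size_extension_poly.
rewrite mulrBl coefB coefXM coefCM coef_gt ?size_extension_poly //=.
by rewrite mulr0 subr0 add0r IHm cat_rcons.
Qed.

Definition squarefree_poly n := extension_poly n [::] 0.

Lemma coef_squarefree_poly n : (squarefree_poly n)`_n = 1.
Proof. by rewrite coef_extension_poly uniq_squarefree ?iota_uniq. Qed.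

Lemma size_squarefree_poly n : size (squarefree_poly n) = n.+1.
Proof.
apply/anti_leq; rewrite size_extension_poly ltnNge /=.
by apply: contraTN isT => /leq_sizeP/(_ n (leqnn n)); rewrite coef_squarefree_poly.
Qed.

Lemma lead_coef_squarefree_poly n : lead_coef (squarefree_poly n) = 1.
Proof. by rewrite lead_coefE size_squarefree_poly coef_squarefree_poly. Qed.

Lemma horner_squarefree_poly n x :
  (squarefree_poly n).[x%:Z] = (nb_squarefree n x)%:Z.
Proof.
rewrite (@horner_extension_poly x n [::]) /nb_squarefree -sum1_card -natz natr_sum.
by rewrite [RHS]big_mkcond; apply: eq_bigr => t _; rewrite inE; case: squarefree.
Qed.

Lemma squarefree_polySS m :
  squarefree_poly m.+2 = 'X * ('X - 1) * extension_poly m [:: 0; 1]%N 2.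
Proof.
rewrite /squarefree_poly !(extension_polyS_pruned, big_nat_recl) //.
by rewrite !big_geq //=; ring.
Qed.

Lemma squarefree_polySSSS m :
  squarefree_poly m.+4 = 'X * ('X - 1) * ('X - 2%:P) *
    (extension_poly m.+1 [:: 0; 1; 2]%N 3 + extension_poly m [:: 0; 1; 0; 2]%N 3).
Proof.
rewrite /squarefree_poly !(extension_polyS_pruned, big_nat_recl) //.
by rewrite !big_geq //=; ring.
Qed.

Lemma squarefree_poly_small :
  [/\ squarefree_poly 0 = 1, squarefree_poly 1 = 'X,
      squarefree_poly 2 = 'X * ('X - 1), squarefree_poly 3 = 'X * ('X - 1) ^+ 2
    & squarefree_poly 4 = 'X ^+ 2 * ('X - 1) * ('X - 2%:P)].
Proof.
rewrite /squarefree_poly; split;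
  rewrite ?(extension_polyS_pruned, big_nat_recl) // ?big_geq //=;
  by rewrite -?squarefree_iotaE /=; ring.
Qed.

Theorem proposition3 :
  exists P : nat -> {poly int},
    (forall n : nat,
        size (P n) = n.+1 /\ lead_coef (P n) = 1 /\
        (forall x : nat, (0 < x)%N -> (P n).[x%:Z] = (nb_squarefree n x)%:Z)) /\
    (forall n : nat, (1 < n)%N ->
        exists q : {poly int}, P n = 'X * ('X - 1) * q) /\
    (forall n : nat, (3 < n)%N ->
        exists q : {poly int}, P n = 'X * ('X - 1) * ('X - 2%:P) * q) /\
    P 0%N = 1 /\
    P 1%N = 'X /\
    P 2%N = 'X * ('X - 1) /\
    P 3%N = 'X * ('X - 1) ^+ 2 /\
    P 4%N = 'X ^+ 2 * ('X - 1) * ('X - 2%:P).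
Proof.
have [P0 P1 P2 P3 P4] := squarefree_poly_small.
exists squarefree_poly; split.
  move=> n; split; first exact: size_squarefree_poly.
  by split=> [|x _]; rewrite ?lead_coef_squarefree_poly ?horner_squarefree_poly.
split; first by case=> [|[|m]] // _; eexists; apply: squarefree_polySS.
split; first by case=> [|[|[|[|m]]]] // _; eexists; apply: squarefree_polySSSS.
by [].
Qed.
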